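(* With $\omega>0$, $c\in[0,1]$, $h>0$ satisfying the stability condition and $\rho(c,\omega,h)$ as in Proposition 9.3, one has $$\rho(c,\omega,h)=\frac12\,\frac{h^4r^2}{(1+\omega^{-2})(1+\omega^{-2}-h^2r)},$$ where $$r=r(c,\omega,h)=\tfrac14(1-c^2+\omega^{-2})^2+c^2(1-c^2+\omega^{-2})R(ch),\qquad R(\zeta)=\frac{1-\zeta\cot\zeta}{\zeta^2}.$$
   Context: Setting of Proposition 9.3: $H=\frac12\omega^{-2}p^2+\frac12(\omega^2+1)q^2$; $\psi_h=\varphi^{(B)}_{h/2}\circ\varphi^{(A)}_h\circ\varphi^{(B)}_{h/2}$ with $(A)$: $\dot q=\omega^{-2}p,\dot p=-c^2\omega^2q$ and $(B)$: $\dot q=0,\dot p=-((1-c^2)\omega^2+1)q$; stability: $ch+2\arctan(h(1+(1-c^2)\omega^2)/(2c\omega^2))<\pi$ ($c>0$), $h<2\omega/\sqrt{1+\omega^2}$ ($c=0$); $\cos\theta_h=\frac12\operatorname{trace}$ of the one-step matrix; $\chi_h=\sin(ch)/(c\omega^2\sin\theta_h)$ ($c>0$) or $h/(\omega^2\sin\theta_h)$ ($c=0$); $\hat\chi_h^2=(\omega^2+\omega^4)\chi_h^2$; $\rho=\frac12(\hat\chi_h^2+\hat\chi_h^{-2}-2)$. For $c=0$ the term involving $R$ is absent (multiplied by $c^2=0$). *)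

From Stdlib Require Import Reals.
Open Scope R_scope.

(* Exact flow of (A): q' = w^-2 p, p' = - c^2 w^2 q, over time t.
   For c > 0 this is the harmonic oscillator of frequency c; for c = 0
   it is the free flow q(t) = q + t w^-2 p, p(t) = p. *)
Definition flowA (c w t : R) (x : R * R) : R * R :=
  let (q, p) := x in
  if Req_dec_T c 0 then (q + t * p / w ^ 2, p)
  else (cos (c * t) * q + sin (c * t) / (c * w ^ 2) * p,
        - c * w ^ 2 * sin (c * t) * q + cos (c * t) * p).

(* Exact flow of (B): q' = 0, p' = -((1 - c^2) w^2 + 1) q. *)
Definition flowB (c w t : R) (x : R * R) : R * R :=
  let (q, p) := x in (q, p - t * ((1 - c ^ 2) * w ^ 2 + 1) * q).

Definition psi (c w h : R) (x : R * R) : R * R :=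
  flowB c w (h / 2) (flowA c w h (flowB c w (h / 2) x)).

(* Trace of the (linear) one-step map: M11 + M22. *)
Definition trace_psi (c w h : R) : R :=
  fst (psi c w h (1, 0)) + snd (psi c w h (0, 1)).

Definition theta (c w h : R) : R := acos (trace_psi c w h / 2).

Definition chi (c w h : R) : R :=
  if Req_dec_T c 0 then h / (w ^ 2 * sin (theta c w h))
  else sin (c * h) / (c * w ^ 2 * sin (theta c w h)).

Definition chihat2 (c w h : R) : R := (w ^ 2 + w ^ 4) * (chi c w h) ^ 2.

Definition rho (c w h : R) : R :=
  / 2 * (chihat2 c w h + / chihat2 c w h - 2).

Definition stable (c w h : R) : Prop :=
  (0 < c -> c * h + 2 * atan (h * (1 + (1 - c ^ 2) * w ^ 2) / (2 * c * w ^ 2)) < PI)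
  /\ (c = 0 -> h < 2 * w / sqrt (1 + w ^ 2)).

Definition cot (z : R) : R := cos z / sin z.

Definition Rfun (z : R) : R := (1 - z * cot z) / z ^ 2.

(* r(c, w, h); for c = 0 the R-term is multiplied by c^2 = 0 and vanishes. *)
Definition rr (c w h : R) : R :=
  / 4 * (1 - c ^ 2 + / w ^ 2) ^ 2 + c ^ 2 * (1 - c ^ 2 + / w ^ 2) * Rfun (c * h).

(* With [T = trace / 2 = cos theta_h], expanding the trace gives
   [1 - T ^ 2 = s ^ 2 * (u - h ^ 2 r)] where [u = 1 + w^-2] and [s = sin (c h) / c]
   ([s = h] for [c = 0]) is the numerator of [chi_h].  Since [sin theta_h ^ 2 = 1 - T ^ 2],
   this gives [hat chi_h ^ 2 = u / D] with [D = u - h ^ 2 r], and then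
   [rho = (X + 1/X - 2) / 2 = (u - D) ^ 2 / (2 u D)].  Stability is exactly [|T| < 1]:
   for [c > 0], [T = cos (c h + f) / cos f] with [f = atan (h (1 + (1 - c^2) w^2) / (2 c w^2))],
   and [0 < c h] and [c h + 2 f < pi] put [cos (c h + f)] strictly between [-cos f] and [cos f]. *)
From Stdlib Require Import Reals Lra Psatz.
Open Scope R_scope.

Definition sinc_time (c h : R) : R := if Req_dec_T c 0 then h else sin (c * h) / c.

Lemma sin_acos_sqr (T : R) : -1 <= T <= 1 -> sin (acos T) ^ 2 = 1 - T ^ 2.
Proof.
  intros HT. rewrite sin_acos by lra.
  rewrite <- Rsqr_pow2, Rsqr_sqrt; [unfold Rsqr; ring|].
  unfold Rsqr; nra.
Qed.

Lemma add_inv_sub_2 (X : R) : X <> 0 -> X + / X - 2 = (X - 1) ^ 2 / X.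
Proof. intros HX. field. exact HX. Qed.

Lemma cos_add_div_cos (x f : R) : cos f <> 0 -> cos (x + f) / cos f = cos x - tan f * sin x.
Proof. intros Hf. rewrite cos_plus. unfold tan. field. exact Hf. Qed.

Lemma cos_add_div_cos_bounds (x f : R) :
  0 < f -> 0 < x -> x + 2 * f < PI -> -1 < cos (x + f) / cos f < 1.
Proof.
  intros Hf Hx Hlt.
  assert (Hcf : 0 < cos f) by (apply cos_gt_0; lra).
  assert (Hup : cos (x + f) < cos f) by (apply cos_decreasing_1; lra).
  assert (Hlo : cos (PI - f) < cos (x + f)) by (apply cos_decreasing_1; lra).
  rewrite cos_minus, cos_PI, sin_PI in Hlo.
  split; apply (Rmult_lt_reg_r (cos f)); auto;
    unfold Rdiv; rewrite Rmult_assoc, Rinv_l by lra; lra.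
Qed.

Section OneStepMap.

Variables c w h : R.
Hypothesis w_neq0 : w <> 0.

Let T := trace_psi c w h / 2.
Let u := 1 + / w ^ 2.

Lemma half_trace_free : c = 0 -> T = 1 - h ^ 2 * u / 2.
Proof.
  intros ->. unfold T, u, trace_psi, psi, flowA, flowB.
  destruct (Req_dec_T 0 0) as [_|]; [|contradiction]. simpl. field. exact w_neq0.
Qed.

Lemma half_trace_osc : c <> 0 ->
  T = cos (c * h) - (h * (1 + (1 - c ^ 2) * w ^ 2) / (2 * c * w ^ 2)) * sin (c * h).
Proof.
  intros Hc. unfold T, trace_psi, psi, flowA, flowB.
  destruct (Req_dec_T c 0) as [|_]; [contradiction|]. simpl. field. auto.
Qed.

Lemma one_sub_half_trace_sqr : (c <> 0 -> sin (c * h) <> 0) ->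
  1 - T ^ 2 = sinc_time c h ^ 2 * (u - h ^ 2 * rr c w h).
Proof.
  intros Hsin. unfold sinc_time, rr.
  destruct (Req_dec_T c 0) as [Hc|Hc].
  - rewrite (half_trace_free Hc). subst c. unfold u. field. exact w_neq0.
  - specialize (Hsin Hc).
    assert (Hh : h <> 0) by (intros ->; rewrite Rmult_0_r, sin_0 in Hsin; auto).
    rewrite (half_trace_osc Hc).
    replace 1 with (sin (c * h) ^ 2 + cos (c * h) ^ 2) at 1
      by (rewrite <- !Rsqr_pow2, sin2_cos2; reflexivity).
    unfold u, Rfun, cot. field. repeat split; auto.
Qed.

Lemma chi_sinc_time : chi c w h = sinc_time c h / (w ^ 2 * sin (theta c w h)).
Proof.
  unfold chi, sinc_time. destruct (Req_dec_T c 0); [reflexivity|].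
  unfold Rdiv. rewrite !Rinv_mult. ring.
Qed.

Lemma chihat2_ratio : -1 < T < 1 ->
  chihat2 c w h = u * sinc_time c h ^ 2 / (1 - T ^ 2).
Proof.
  intros HT.
  assert (Hsin2 : sin (theta c w h) ^ 2 = 1 - T ^ 2)
    by (unfold theta; apply sin_acos_sqr; lra).
  assert (Hsin : sin (theta c w h) <> 0)
    by (intros E; rewrite E in Hsin2; simpl in Hsin2; nra).
  unfold chihat2. rewrite chi_sinc_time, <- Hsin2. unfold u. field. auto.
Qed.

Lemma stable_free_half_trace_bounds : c = 0 -> 0 < w -> 0 < h -> stable c w h -> -1 < T < 1.
Proof.
  intros Hc Hw Hh [_ Hst]. specialize (Hst Hc).
  rewrite (half_trace_free Hc).
  assert (Hw2 : 0 < w ^ 2) by nra.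
  assert (Hs : 0 < sqrt (1 + w ^ 2)) by (apply sqrt_lt_R0; nra).
  assert (Hsq : sqrt (1 + w ^ 2) ^ 2 = 1 + w ^ 2)
    by (rewrite <- Rsqr_pow2, Rsqr_sqrt by nra; reflexivity).
  assert (Hhs : h * sqrt (1 + w ^ 2) < 2 * w).
  { apply (Rmult_lt_compat_r (sqrt (1 + w ^ 2))) in Hst; auto.
    unfold Rdiv in Hst. rewrite Rmult_assoc, Rinv_l in Hst; lra. }
  assert (Hu : h ^ 2 * u * w ^ 2 = (h * sqrt (1 + w ^ 2)) ^ 2)
    by (rewrite Rpow_mult_distr, Hsq; unfold u; field; lra).
  assert (Hpos : 0 < h ^ 2 * u) by (unfold u; apply Rmult_lt_0_compat;
    [nra | assert (0 < / w ^ 2) by (apply Rinv_0_lt_compat; lra); lra]).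
  assert (h ^ 2 * u < 4).
  { apply (Rmult_lt_reg_r (w ^ 2)); auto. rewrite Hu.
    assert (0 < h * sqrt (1 + w ^ 2)) by nra. nra. }
  lra.
Qed.

Lemma stable_osc_half_trace_bounds : 0 < c <= 1 -> 0 < w -> 0 < h -> stable c w h ->
  -1 < T < 1 /\ 0 < sin (c * h).
Proof.
  intros Hc Hw Hh [Hst _]. specialize (Hst (proj1 Hc)).
  set (y := h * (1 + (1 - c ^ 2) * w ^ 2) / (2 * c * w ^ 2)) in *.
  assert (Hy : 0 < y).
  { assert (0 <= 1 - c ^ 2) by nra. assert (0 < w ^ 2) by nra.
    unfold y. apply Rdiv_lt_0_compat; [apply Rmult_lt_0_compat|]; nra. }
  assert (Hf : 0 < atan y) by (rewrite <- atan_0; apply atan_increasing, Hy).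
  assert (Hcf : 0 < cos (atan y))
    by (destruct (atan_bound y); apply cos_gt_0; lra).
  assert (Hch : 0 < c * h) by nra.
  split.
  - rewrite (half_trace_osc (Rgt_not_eq _ _ (proj1 Hc))).
    fold y. rewrite <- (tan_atan y), <- cos_add_div_cos by lra.
    apply cos_add_div_cos_bounds; lra.
  - apply sin_gt_0; lra.
Qed.

Lemma stable_discriminant : 0 < w -> 0 <= c <= 1 -> 0 < h -> stable c w h ->
  -1 < T < 1 /\ 0 < sinc_time c h ^ 2 /\
  1 - T ^ 2 = sinc_time c h ^ 2 * (u - h ^ 2 * rr c w h).
Proof.
  intros Hw Hc Hh Hst.
  destruct (Req_dec c 0) as [Hc0|Hc0].
  - split; [exact (stable_free_half_trace_bounds Hc0 Hw Hh Hst)|].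
    unfold sinc_time; destruct (Req_dec_T c 0) as [_|]; [|contradiction].
    split; [nra|].
    rewrite one_sub_half_trace_sqr by contradiction.
    unfold sinc_time; destruct (Req_dec_T c 0) as [_|]; [reflexivity|contradiction].
  - assert (Hcp : 0 < c <= 1) by lra.
    destruct (stable_osc_half_trace_bounds Hcp Hw Hh Hst) as [HT Hsin].
    split; [exact HT|].
    rewrite one_sub_half_trace_sqr by lra.
    unfold sinc_time; destruct (Req_dec_T c 0) as [|_]; [contradiction|].
    split; [apply pow_lt, Rdiv_lt_0_compat; lra | reflexivity].
Qed.

End OneStepMap.

Theorem proposition9p4 (c w h : R) :
  0 < w -> 0 <= c <= 1 -> 0 < h -> stable c w h ->
  rho c w h =
    / 2 * (h ^ 4 * (rr c w h) ^ 2 /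
           ((1 + / w ^ 2) * (1 + / w ^ 2 - h ^ 2 * rr c w h))).
Proof.
  intros Hw Hc Hh Hst.
  assert (Hw0 : w <> 0) by lra.
  destruct (stable_discriminant c w h Hw0 Hw Hc Hh Hst) as [HT [Hs HTD]].
  set (T := trace_psi c w h / 2) in *.
  set (u := 1 + / w ^ 2) in *.
  set (D := u - h ^ 2 * rr c w h) in *.
  assert (Hu : 0 < u) by (unfold u; assert (0 < / w ^ 2) by (apply Rinv_0_lt_compat; nra); lra).
  assert (HD : 0 < D) by nra.
  unfold rho. rewrite (chihat2_ratio c w h Hw0 HT). fold T u. rewrite HTD.
  rewrite add_inv_sub_2 by (apply Rgt_not_eq, Rdiv_lt_0_compat; nra).
  replace (h ^ 4 * rr c w h ^ 2) with ((u - D) ^ 2) by (unfold D; ring).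
  f_equal. field. repeat split; [lra | lra | intros E; rewrite E in Hs; lra].
Qed.
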